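(* For every $k\ge1$, $G_k$ is a normal subgroup of $B_k$.
   Context: Let $C_2=\{e,\sigma\}$ with $\sigma=(1,2)$. Define $B_1=C_2$ and $B_k=B_{k-1}\wr C_2$ for $k>1$, with elements written as wreath recursions $(g_1,g_2)\pi$, $g_1,g_2\in B_{k-1}$, $\pi\in C_2$, and multiplication $(g_1,g_2)\pi\cdot(h_1,h_2)\rho=(g_1h_{\pi(1)},g_2h_{\pi(2)})\pi\rho$. Define $G_1=\{e\}$ and, for $k>1$, $G_k=\{(g_1,g_2)\pi\in B_k : g_1g_2\in G_{k-1}\}$. *)

From HB Require Import structures.
From mathcomp Require Import all_boot all_fingroup.
Set Implicit Arguments. Unset Strict Implicit. Unset Printing Implicit Defensive.

Local Open Scope group_scope.

(* C2 = {e, sigma}: modelled as bool, false = e, true = sigma = (1,2);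
   the group law is composition of permutations of {1,2}, i.e. xor. *)
Definition C2 := bool.
HB.instance Definition _ := Finite.copy C2 bool.

Lemma C2_mulA : associative (addb : C2 -> C2 -> C2).
Proof. exact: addbA. Qed.
Lemma C2_mul1 : left_id (false : C2) addb.
Proof. by case. Qed.
Lemma C2_mulV : left_inverse (false : C2) (@id C2) addb.
Proof. by case. Qed.
HB.instance Definition _ := Finite_isGroup.Build C2 C2_mulA C2_mul1 C2_mulV.

(* The wreath product  gT wr C2 : elements (g1, g2, pi) written (g1,g2)pi,
   with  (g1,g2)pi * (h1,h2)rho = (g1 h_{pi(1)}, g2 h_{pi(2)}) pi rho,
   where pi(1) = 2, pi(2) = 1 if pi = sigma (true). *)
Section Wreath.
Variable gT : finGroupType.

Definition wr := (gT * gT * C2)%type.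
HB.instance Definition _ := Finite.copy wr (gT * gT * C2)%type.

Definition wr_mul (x y : wr) : wr :=
  let: (g1, g2, p) := x in
  let: (h1, h2, r) := y in
  (g1 * (if p then h2 else h1), g2 * (if p then h1 else h2), p * r).

Definition wr_one : wr := (1, 1, 1).

Definition wr_inv (x : wr) : wr :=
  let: (g1, g2, p) := x in
  if p then (g2^-1, g1^-1, p) else (g1^-1, g2^-1, p).

Lemma wr_mulA : associative wr_mul.
Proof.
by move=> [[g1 g2] [|]] [[h1 h2] [|]] [[k1 k2] [|]];
  rewrite /wr_mul /= ?mulgA.
Qed.

Lemma wr_mul1 : left_id wr_one wr_mul.
Proof. by move=> [[g1 g2] p]; rewrite /wr_mul /= !mul1g. Qed.

Lemma wr_mulV : left_inverse wr_one wr_inv wr_mul.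
Proof. by move=> [[g1 g2] [|]]; rewrite /wr_mul /wr_inv /= !mulVg. Qed.

HB.instance Definition _ := Finite_isGroup.Build wr wr_mulA wr_mul1 wr_mulV.
End Wreath.

(* B_1 = C2, B_k = B_{k-1} wr C2 for k > 1.  (B 0 is an unused junk value.) *)
Fixpoint B (k : nat) : finGroupType :=
  match k with
  | 0 => C2
  | S k' => match k' with 0 => C2 | _ => wr (B k') end
  end.

(* G_1 = {e},  G_k = {(g1,g2)pi in B_k | g1 g2 in G_{k-1}} for k > 1.
   (G 0 is an unused junk value.) *)
Fixpoint G (k : nat) : {set B k} :=
  match k as n return {set B n} with
  | 0 => [set 1]
  | S k' =>
    match k' as m return {set B m} -> {set B m.+1} with
    | 0 => fun _ => [set 1]
    | S k'' => fun Gprev =>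
        [set x : wr (B k''.+1) | (x.1.1 * x.1.2) \in Gprev]
    end (G k')
  end.

From HB Require Import structures.
From mathcomp Require Import all_boot all_fingroup.

(* G_k is the kernel of the homomorphism B_k -> C_2 that multiplies the
   labels on the deepest level of the portrait of an element of B_k; this
   map is multiplicative because, C_2 being abelian, the product of the two
   sections of a wreath recursion does not see the permutation that swaps
   them. *)

Set Implicit Arguments.
Unset Strict Implicit.
Unset Printing Implicit Defensive.

Local Open Scope group_scope.

Section WreathFold.
Variables (gT aT : finGroupType) (f : gT -> aT).
Hypothesis fM : {morph f : x y / x * y}.
Hypothesis aT_comm : forall a b : aT, commute a b.

Definition wr_fold (x : wr gT) : aT := f x.1.1 * f x.1.2.

Lemma wr_foldM : {morph wr_fold : x y / x * y}.
Proof.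
move=> [[g1 g2] p] [[h1 h2] r]; rewrite /wr_fold /= !fM.
have swap_mid (a b c d : aT) : a * b * (c * d) = a * c * (b * d).
  by rewrite -!mulgA (mulgA b) (aT_comm b c) -mulgA.
by case: p; rewrite swap_mid // (aT_comm (f h2)).
Qed.

End WreathFold.

Lemma C2_comm (a b : C2) : commute a b.
Proof. exact: addbC. Qed.

Fixpoint bottom_parity (k : nat) : B k -> C2 :=
  match k as n return B n -> C2 with
  | 0 => id
  | S k' =>
    match k' as m return (B m -> C2) -> B m.+1 -> C2 with
    | 0 => fun _ => id
    | S _ => @wr_fold _ _
    end (@bottom_parity k')
  end.

Lemma bottom_parityM n : {morph @bottom_parity n.+1 : x y / x * y}.
Proof.
elim: n => [|n IH] //.
exact: (wr_foldM IH C2_comm).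
Qed.

Canonical bottom_parity_morphism n :=
  @Morphism _ _ [set: B n.+1] _ (in2W (@bottom_parityM n)).

Lemma G_ker n : G n.+1 = 'ker (bottom_parity_morphism n).
Proof.
apply/setP => x; rewrite (sameP (kerP _ (in_setT x)) eqP).
elim: n x => [|n IH] x; first by rewrite inE.
by rewrite [in LHS]inE IH morphM ?in_setT.
Qed.

Theorem mainTheorem12 (k : nat) : 1 <= k ->
  group_set (G k) && (G k <| [set: B k])%g.
Proof.
case: k => [|n] // _.
by rewrite G_ker groupP ker_normal.
Qed.
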